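(* For every integer $n\ge0$, $$\operatorname{pod}(n)=(-1)^n\sum_{\substack{c\in\mathcal C_{P_3}\\ |c|=n}}(-1)^{\ell(c)},$$ where $P_3=\{m(m+1)/2: m\in\mathbb N\}$ is the set of positive triangular numbers.
   Context: $\operatorname{pod}(n)$ is the number of partitions of $n$ in which odd parts are not repeated (even parts may repeat), with $\operatorname{pod}(0)=1$. A composition is an ordered finite sequence of positive integers (including the empty one); $|c|$ is the sum and $\ell(c)$ the number of parts; $\mathcal C_T$ is the set of compositions with all parts in $T$. *)

From mathcomp Require Import all_boot all_order all_algebra.
Set Implicit Arguments. Unset Strict Implicit. Unset Printing Implicit Defensive.
Import GRing.Theory.

Definition triangular (t : nat) : bool :=
  [exists m : 'I_t.+1, (0 < m) && (m * m.+1 == t.*2)].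

(* A partition of n is encoded by its multiplicity function:
   f i = number of parts equal to i.+1 (parts are in 1..n, multiplicities <= n). *)
Definition is_pod_partition {n : nat} (f : {ffun 'I_n -> 'I_n.+1}) : bool :=
  (\sum_(i < n) i.+1 * f i == n) && [forall i : 'I_n, odd i.+1 ==> (f i <= 1)].

Definition pod (n : nat) : nat := #|[pred f : {ffun 'I_n -> 'I_n.+1} | is_pod_partition f]|.

(* A composition of n with k parts, encoded by a k-tuple t of 'I_n,
   where t_j represents the part t_j.+1 (any composition of n has all parts
   in 1..n and at most n parts). *)
Definition comp_sum {k n : nat} (t : k.-tuple 'I_n) : nat :=
  \sum_(x <- t) x.+1.

Definition comp_in_T (T : pred nat) {k n : nat} (t : k.-tuple 'I_n) : bool :=
  all (fun x : 'I_n => T x.+1) t.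

Definition signed_comp_sum (T : pred nat) (n : nat) : int :=
  \sum_(k < n.+1)
     \sum_(t : k.-tuple 'I_n | comp_in_T T t && (comp_sum t == n))
        ((-1) ^+ k)%R.

From mathcomp Require Import all_boot all_order all_algebra.
From mathcomp Require Import zify ring.
Import GRing.Theory.
Local Open Scope ring_scope.

Set Implicit Arguments. Unset Strict Implicit. Unset Printing Implicit Defensive.

(* Both sides are the [n]-th coefficient of [1 / psi(-x)], where
   [psi(q) = sum_(j >= 0) q^(j (j + 1) / 2)].
   For pod, [sum_n pod(n) x^n = (-x; x^2)_oo / (x^2; x^2)_oo], and Gauss's identity
   [psi(q) = (q^2; q^2)_oo / (q; q^2)_oo] turns this into [1 / psi(-x)]. Gauss's identity
   comes from the q-binomial theorem at [x = q^m], which gives the finite triple product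
   [2 (-q; q)_m (-q; q)_(m+1) = sum_k [2m+2, k]_q q^(T_(|k - m - 1/2| - 1/2))], hence
   [(q; q)_oo (-q; q)_oo^2 = psi(q)] as [m] grows, together with Euler's
   [(-q; q)_oo (q; q^2)_oo = 1].
   For compositions, [1 / psi(-x) = sum_k (-W)^k] with [W = sum_(t in P_3) (-x)^t], and the
   [n]-th coefficient of [W^k] is [(-1)^n] times the number of compositions of [n] into [k]
   triangular parts.
   All series are truncated at order [n]: they are polynomials compared modulo [x^(n+1)]. *)

Section Truncation.
Variable R : nzRingType.
Implicit Types p r u : {poly R}.

Definition eq_upto N p r := take_poly N.+1 p = take_poly N.+1 r.

Lemma eq_uptoP N p r : eq_upto N p r <-> forall i, (i <= N)%N -> p`_i = r`_i.
Proof.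
split=> [E i Hi | E]; first by have := congr1 (coefp i) E; rewrite /= !coef_take_poly ltnS Hi.
by apply/polyP => i; rewrite !coef_take_poly ltnS; case: leqP => // /E.
Qed.

Lemma eq_upto_trans N r p u : eq_upto N p r -> eq_upto N r u -> eq_upto N p u.
Proof. exact: etrans. Qed.

Lemma eq_uptoD N p p' r r' :
  eq_upto N p p' -> eq_upto N r r' -> eq_upto N (p + r) (p' + r').
Proof.
by move=> /eq_uptoP E1 /eq_uptoP E2; apply/eq_uptoP => i Hi; rewrite !coefD E1 ?E2.
Qed.

Lemma eq_uptoB N p p' r r' :
  eq_upto N p p' -> eq_upto N r r' -> eq_upto N (p - r) (p' - r').
Proof.
by move=> /eq_uptoP E1 /eq_uptoP E2; apply/eq_uptoP => i Hi; rewrite !coefB E1 ?E2.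
Qed.

Lemma eq_uptoMn N p r m : eq_upto N p r -> eq_upto N (p *+ m) (r *+ m).
Proof. by move=> /eq_uptoP E; apply/eq_uptoP => i Hi; rewrite !coefMn E. Qed.

Lemma eq_uptoM N p p' r r' :
  eq_upto N p p' -> eq_upto N r r' -> eq_upto N (p * r) (p' * r').
Proof.
move=> /eq_uptoP E1 /eq_uptoP E2; apply/eq_uptoP => i Hi; rewrite !coefM.
by apply: eq_bigr => j _; rewrite E1 ?E2 // (leq_trans _ Hi) ?leq_subr // -ltnS.
Qed.

Lemma eq_upto_sum N (I : Type) (s : seq I) (P : pred I) (F G : I -> {poly R}) :
  (forall i, P i -> eq_upto N (F i) (G i)) ->
  eq_upto N (\sum_(i <- s | P i) F i) (\sum_(i <- s | P i) G i).
Proof.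
move=> E; elim/big_rec2: _ => [//|i x y Pi Exy].
exact: eq_uptoD (E _ Pi) Exy.
Qed.

Lemma eq_upto_prod N (I : Type) (s : seq I) (P : pred I) (F G : I -> {poly R}) :
  (forall i, P i -> eq_upto N (F i) (G i)) ->
  eq_upto N (\prod_(i <- s | P i) F i) (\prod_(i <- s | P i) G i).
Proof.
move=> E; elim/big_rec2: _ => [//|i x y Pi Exy].
exact: eq_uptoM (E _ Pi) Exy.
Qed.

(* A factor with constant term [1] is invertible as a power series. *)
Lemma eq_upto_mulIr N p r u : u`_0 = 1 -> eq_upto N (p * u) (r * u) -> eq_upto N p r.
Proof.
move=> u0 /eq_uptoP E; apply/eq_uptoP; elim/ltn_ind => i IH iN.
have := E i iN; rewrite !coefM !big_ord_recr /= subnn u0 !mulr1.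
rewrite (eq_bigr (fun j : 'I_i => r`_j * u`_(i - j))) => [/addrI //|j _].
by rewrite IH // (leq_trans _ iN) // ltnW.
Qed.

Lemma coef_exprn_small p m i : p`_0 = 0 -> (i < m)%N -> (p ^+ m)`_i = 0.
Proof.
move=> p0; elim: m i => [|m IH] i //= Hi.
rewrite exprS coefM big1 // => j _.
have [->|j_gt0] := posnP j; first by rewrite p0 mul0r.
by rewrite IH ?mulr0 //; have := ltn_ord j; lia.
Qed.

Lemma eq_upto_exprn_small N p m : p`_0 = 0 -> (N < m)%N -> eq_upto N (p ^+ m) 0.
Proof.
by move=> p0 Hm; apply/eq_uptoP => i Hi; rewrite coef0 coef_exprn_small // (leq_ltn_trans Hi).
Qed.

Lemma eq_upto_geometric N p : p`_0 = 0 -> eq_upto N ((1 - p) * \sum_(k < N.+1) p ^+ k) 1.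
Proof.
move=> p0; rewrite -opprB mulNr -subrX1 opprB -[X in eq_upto _ _ X]subr0.
exact: eq_uptoB (erefl _) (eq_upto_exprn_small p0 (ltnSn N)).
Qed.

Lemma coef0_prod (I : Type) (s : seq I) (P : pred I) (F : I -> {poly R}) :
  (\prod_(i <- s | P i) F i)`_0 = \prod_(i <- s | P i) (F i)`_0.
Proof. by apply: (big_morph _ (@coef0M R)); rewrite coef1. Qed.

Lemma eq_upto_prod_widen N M (F : nat -> {poly R}) :
  (forall i, (N <= i)%N -> eq_upto N (F i) 1) -> (N <= M)%N ->
  eq_upto N (\prod_(i < M) F i) (\prod_(i < N) F i).
Proof.
move=> F1 /subnKC <-; elim: (M - N)%N => [|d IH]; first by rewrite addn0.
rewrite addnS big_ord_recr /= -[\prod_(i < N) F i]mulr1.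
by apply: eq_uptoM => //; apply: F1; apply: leq_addr.
Qed.

Lemma eq_upto_sum_widen N K M (F : nat -> {poly R}) :
  (forall i, (K <= i)%N -> eq_upto N (F i) 0) -> (K <= M)%N ->
  eq_upto N (\sum_(i < M) F i) (\sum_(i < K) F i).
Proof.
move=> F0 /subnKC <-; elim: (M - K)%N => [|d IH]; first by rewrite addn0.
rewrite addnS big_ord_recr /= -[\sum_(i < K) F i]addr0.
by apply: eq_uptoD => //; apply: F0; apply: leq_addr.
Qed.

End Truncation.

Arguments eq_upto_trans {R N} r {p u}.

Section QBinomial.
Variables (R : comNzRingType) (q : R).

Fixpoint qbin N k : R :=
  if k is k'.+1 then
    if N is N'.+1 then qbin N' k'.+1 + q ^+ (N' - k') * qbin N' k' else 0
  else 1.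

Definition qpochm M : R := \prod_(i < M) (1 - q ^+ i.+1).
Definition qpochp M : R := \prod_(i < M) (1 + q ^+ i.+1).

Lemma qbin0 N : qbin N 0 = 1. Proof. by case: N. Qed.

Lemma qbin_small N k : (N < k)%N -> qbin N k = 0.
Proof.
elim: N k => [|N IH] [|k] //= Hk.
by rewrite !IH ?mulr0 ?addr0 // ltnW.
Qed.

Lemma qpochmS M : qpochm M.+1 = qpochm M * (1 - q ^+ M.+1).
Proof. by rewrite /qpochm big_ord_recr. Qed.

Lemma qpochm0 : qpochm 0 = 1. Proof. exact: big_ord0. Qed.

Lemma qbin_qpochm N k : (k <= N)%N -> qbin N k * qpochm k * qpochm (N - k) = qpochm N.
Proof.
elim: N k => [|N IH] [|k] //= Hk; rewrite ?qpochm0 ?subn0 ?mul1r //.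
rewrite ltnS subSS in Hk *.
case: (ltngtP k N) Hk => // [k_lt_N _|-> _]; last first.
  rewrite qbin_small // subnn expr0 mul1r add0r qpochmS qpochm0 mulr1 mulrA.
  by have := IH N (leqnn N); rewrite subnn qpochm0 mulr1 => ->.
have NkS : (N - k = (N - k.+1).+1)%N by rewrite subnSK.
rewrite {2}NkS !qpochmS -NkS.
have -> : (qbin N k.+1 + q ^+ (N - k) * qbin N k) * (qpochm k * (1 - q ^+ k.+1)) *
    (qpochm (N - k.+1) * (1 - q ^+ (N - k))) =
    (qbin N k.+1 * (qpochm k * (1 - q ^+ k.+1)) * qpochm (N - k.+1)) * (1 - q ^+ (N - k)) +
    q ^+ (N - k) * (qbin N k * qpochm k * (qpochm (N - k.+1) * (1 - q ^+ (N - k))))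
      * (1 - q ^+ k.+1) by ring.
have -> : qpochm (N - k.+1) * (1 - q ^+ (N - k)) = qpochm (N - k) by rewrite NkS qpochmS.
rewrite -qpochmS IH // IH 1?ltnW //.
have -> : q ^+ N.+1 = q ^+ (N - k) * q ^+ k.+1 by rewrite -exprD; congr (_ ^+ _); lia.
ring.
Qed.

Lemma qbinomial (x : R) N :
  \prod_(i < N) (x + q ^+ i) = \sum_(k < N.+1) qbin N k * x ^+ (N - k) * q ^+ 'C(k, 2).
Proof.
elim: N => [|N IH]; first by rewrite big_ord0 big_ord1 /= !mulr1.
rewrite big_ord_recr /= IH mulr_suml [RHS]big_ord_recl /= subn0 bin0n expr0 mulr1.
under [in RHS]eq_bigr => k _ do rewrite /bump /= add1n subSS add0n !mulrDl.
rewrite big_split /= mul1r addrA.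
under eq_bigr => k _ do rewrite mulrDr.
rewrite big_split /=; congr (_ + _).
  rewrite big_ord_recl /= qbin0 subn0 expr0 mulr1 mul1r -exprSr.
  rewrite [X in _ = _ + X]big_ord_recr /= qbin_small // !mul0r addr0.
  congr (_ + _); apply: eq_bigr => k _; rewrite /bump /= add1n.
  have -> : (N - k = (N - k.+1).+1)%N by have := ltn_ord k; lia.
  by rewrite exprS; ring.
apply: eq_bigr => k _; have Hk := ltn_ord k.
rewrite binS bin1 exprD.
have -> : q ^+ N = q ^+ (N - k) * q ^+ k by rewrite -exprD subnK // -ltnS.
ring.
Qed.

End QBinomial.

Lemma bin2Z n : ('C(n, 2))%:Z * 2 = n%:Z * (n%:Z - 1).
Proof. by elim: n => [|n IH] //; rewrite binS bin1 PoszD mulrDl IH intS; ring. Qed.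

Lemma leq_pred_bin2 a : (a.-1 <= 'C(a, 2))%N.
Proof. by case: a => // a; rewrite binS bin1 leq_addl. Qed.

Lemma bin2S_inj : injective (fun a => 'C(a.+1, 2)).
Proof.
by apply/incn_inj/Order.NatMonotonyTheory.incnP => i; rewrite ltEnat /= (binS i.+1) bin1; lia.
Qed.

Lemma bin2S_double m : ('C(m.+1, 2) * 2 = m.+1 * m)%N.
Proof. by elim: m => // m IH; rewrite binS bin1 mulnDl IH; lia. Qed.

Lemma triangularE n t : (0 < t <= n)%N ->
  triangular t = [exists j : 'I_n.+1, 'C(j.+1, 2) == t].
Proof.
case/andP=> t_gt0 tn; apply/existsP/existsP => [[m /andP [m_gt0 /eqP E]] | [j /eqP E]].
  have mn : (m < n.+1)%N by have := ltn_ord m; lia.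
  by exists (Ordinal mn); apply/eqP => /=; have := bin2S_double m; lia.
have jt : (j < t.+1)%N by have := leq_pred_bin2 j.+1; lia.
exists (Ordinal jt); apply/andP; split=> /=; have := bin2S_double j; lia.
Qed.

(* [C(|k - m - 1/2| + 1/2, 2)]: the exponent left after completing the square in
   the q-binomial theorem at [x = q^m]. *)
Definition tri_offset m k := if (m < k)%N then 'C(k - m, 2) else 'C(m.+1 - k, 2).

Lemma tri_offsetE m k : (k <= m + m.+2)%N ->
  (m * (m + m.+2 - k) + 'C(k, 2) = 'C(m, 2) + m * m.+2 + tri_offset m k)%N.
Proof.
rewrite /tri_offset => Hk; apply/eqP; rewrite -eqz_nat; apply/eqP.
apply: (@mulIf _ 2) => //.
rewrite !PoszD !PoszM !mulrDl !bin2Z -subzn // !PoszD !intS.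
by case: ifP => H; rewrite bin2Z -subzn ?intS; lia.
Qed.

Lemma sum_tri_offset (V : nmodType) (F : nat -> V) m :
  \sum_(k < (m + m.+2).+1) F (tri_offset m k) =
  \sum_(j < m.+1) F 'C(j.+1, 2) + \sum_(j < m.+2) F 'C(j.+1, 2).
Proof.
rewrite -(big_mkord xpredT (F \o tri_offset m)) (big_cat_nat _ (n := m.+1)) //=; last by lia.
congr (_ + _).
  rewrite big_nat_rev big_mkord; apply: eq_bigr => k _; have Hk := ltn_ord k.
  rewrite /tri_offset /= add0n subSS ifN; last by lia.
  by congr (F 'C(_, 2)); lia.
rewrite -{1}(add0n m.+1) big_addn (_ : (m + m.+2).+1 - m.+1 = m.+2)%N; last by lia.
rewrite big_mkord; apply: eq_bigr => k _; have Hk := ltn_ord k.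
by rewrite /tri_offset /= ifT; [congr (F 'C(_, 2)) | ]; lia.
Qed.

Lemma qbinomial_tri (R : idomainType) (q : R) m : q != 0 ->
  2 * qpochp q m * qpochp q m.+1 =
  \sum_(k < (m + m.+2).+1) qbin q (m + m.+2) k * q ^+ tri_offset m k.
Proof.
move=> qN0; have := qbinomial q (q ^+ m) (m + m.+2).
rewrite big_split_ord /=.
have -> : \prod_(i < m) (q ^+ m + q ^+ i) = q ^+ 'C(m, 2) * qpochp q m.
  have E (i : 'I_m) : q ^+ m + q ^+ i = q ^+ i * (1 + q ^+ (m - i)).
    by rewrite mulrDr mulr1 -exprD subnKC 1?addrC // ltnW.
  rewrite (eq_bigr _ (fun i _ => E i)) big_split /= prodrXr -bin2_sum big_mkord.
  congr (_ * _); rewrite /qpochp (reindex_inj rev_ord_inj) /=.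
  by apply: eq_bigr => i _; rewrite subKn.
have -> : \prod_(j < m.+2) (q ^+ m + q ^+ (m + j)) = q ^+ (m * m.+2) * (2 * qpochp q m.+1).
  have E (j : 'I_m.+2) : q ^+ m + q ^+ (m + j) = q ^+ m * (1 + q ^+ j).
    by rewrite exprD mulrDr mulr1.
  rewrite (eq_bigr _ (fun i _ => E i)) big_split /= prodr_const card_ord -exprM.
  by rewrite big_ord_recl /= expr0.
have -> : \sum_(k < (m + m.+2).+1)
     qbin q (m + m.+2) k * (q ^+ m) ^+ (m + m.+2 - k) * q ^+ 'C(k, 2) =
   q ^+ ('C(m, 2) + m * m.+2) *
     \sum_(k < (m + m.+2).+1) qbin q (m + m.+2) k * q ^+ tri_offset m k.
  rewrite mulr_sumr; apply: eq_bigr => k _.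
  by rewrite -exprM -mulrA -exprD tri_offsetE 1?exprD 1?mulrCA // -ltnS.
rewrite exprD => E.
apply: (mulfI (mulf_neq0 (expf_neq0 'C(m, 2) qN0) (expf_neq0 (m * m.+2) qN0))).
by rewrite -E; ring.
Qed.

Section Gauss.
Variable q : {poly int}.
Hypotheses (q0 : q`_0 = 0) (qN0 : q != 0).

Definition gauss_psi N := \sum_(j < N.+1) q ^+ 'C(j.+1, 2).

Lemma coef0_1Bexp (P : pred nat) M : (\prod_(i < M | P i) (1 - q ^+ i.+1))`_0 = 1.
Proof.
rewrite coef0_prod big1 // => i _.
by rewrite coefB coef1 coef_exprn_small ?subr0.
Qed.

Lemma eq_upto_1Bexp N e : (N < e)%N -> eq_upto N (1 - q ^+ e) 1.
Proof.
move=> Ne; rewrite -[X in eq_upto _ _ X]subr0.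
exact: eq_uptoB (erefl _) (eq_upto_exprn_small q0 Ne).
Qed.

Lemma prod_1Bexp_widen (P : pred nat) N M : (N <= M)%N ->
  eq_upto N (\prod_(i < M | P i) (1 - q ^+ i.+1)) (\prod_(i < N | P i) (1 - q ^+ i.+1)).
Proof.
move=> NM.
have mkcond K : \prod_(i < K | P i) (1 - q ^+ i.+1) =
    \prod_(i < K) (if P i then 1 - q ^+ i.+1 else 1) by rewrite big_mkcond.
rewrite !mkcond.
apply: (eq_upto_prod_widen (F := fun i => if P i then 1 - q ^+ i.+1 else 1) _ NM) => i Ni.
by case: (P i); [apply: eq_upto_1Bexp | by []].
Qed.

Lemma qpochm_widen N M : (N <= M)%N -> eq_upto N (qpochm q M) (qpochm q N).
Proof. exact: (prod_1Bexp_widen xpredT). Qed.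

Lemma qpochp_widen N M : (N <= M)%N -> eq_upto N (qpochp q M) (qpochp q N).
Proof.
move=> NM; apply: (eq_upto_prod_widen (F := fun i => 1 + q ^+ i.+1) _ NM) => i Ni.
rewrite -[X in eq_upto _ _ X]addr0.
exact: eq_uptoD (erefl _) (eq_upto_exprn_small q0 _).
Qed.

Lemma qpochm_qbin_central N L k : (N <= k)%N -> (N <= L - k)%N -> (k <= L)%N ->
  eq_upto N (qpochm q L * qbin q L k) 1.
Proof.
move=> Nk NLk kL.
have E : eq_upto N (qbin q L k * qpochm q N * qpochm q N) (qpochm q N).
  apply: (eq_upto_trans (qbin q L k * qpochm q k * qpochm q (L - k))).
    apply: eq_uptoM (eq_uptoM (erefl _) _) _;
      apply: esym; apply: qpochm_widen; [exact: Nk | exact: NLk].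
  by rewrite qbin_qpochm //; apply: qpochm_widen (leq_trans Nk kL).
have {}E : eq_upto N (qbin q L k * qpochm q N) 1.
  by apply: eq_upto_mulIr (coef0_1Bexp xpredT N) _; rewrite mul1r.
rewrite mulrC; apply: eq_upto_trans _ _ E.
exact: eq_uptoM (erefl _) (qpochm_widen (leq_trans Nk kL)).
Qed.

Lemma gauss_psi_widen N M : (N < M)%N ->
  eq_upto N (\sum_(j < M) q ^+ 'C(j.+1, 2)) (gauss_psi N).
Proof.
move=> NM; apply: (eq_upto_sum_widen (F := fun j => q ^+ 'C(j.+1, 2)) _ NM) => j Nj.
by apply: eq_upto_exprn_small => //; have := leq_pred_bin2 j.+1; lia.
Qed.

(* Far from the centre [k = m + 1] the exponent [tri_offset m k] exceeds [N]; near it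
   the factor [(q; q)_(2m+2)] inverts the Gaussian binomial. *)
Lemma qpochm_qbinomial_tri N m : (N.*2 <= m)%N ->
  eq_upto N (qpochm q (m + m.+2) * (2 * qpochp q m * qpochp q m.+1))
    (\sum_(k < (m + m.+2).+1) q ^+ tri_offset m k).
Proof.
move=> Nm; rewrite qbinomial_tri // mulr_sumr; apply: eq_upto_sum => k _.
have Hk := ltn_ord k; rewrite mulrA.
have [/andP [Nk NLk]|Nk] := boolP ((N <= k) && (N <= m + m.+2 - k))%N.
  rewrite -[X in eq_upto _ _ X]mul1r.
  by apply: eq_uptoM (erefl _); apply: qpochm_qbin_central; lia.
have Ntri : (N < tri_offset m k)%N.
  move: Nm Nk; rewrite -addnn /tri_offset; case: ifP => mk.
    by have := leq_pred_bin2 (k - m); lia.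
  by have := leq_pred_bin2 (m.+1 - k); lia.
apply: (eq_upto_trans 0); last exact/esym/eq_upto_exprn_small.
rewrite mulrC -(mul0r (qpochm q (m + m.+2) * qbin q (m + m.+2) k)).
exact: eq_uptoM (eq_upto_exprn_small q0 Ntri) (erefl _).
Qed.

Lemma gauss_psiE N :
  eq_upto N (qpochm q N * qpochp q N * qpochp q N) (gauss_psi N).
Proof.
set m := N.*2; set L := (m + m.+2)%N.
have E1 : eq_upto N (qpochm q L * (2 * qpochp q m * qpochp q m.+1))
    ((qpochm q N * qpochp q N * qpochp q N) *+ 2).
  have -> : qpochm q L * (2 * qpochp q m * qpochp q m.+1) =
      (qpochm q L * qpochp q m * qpochp q m.+1) *+ 2 by rewrite -mulr_natl; ring.
  apply/eq_uptoMn/eq_uptoM; first apply: eq_uptoM.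
  - by apply: qpochm_widen; rewrite /L /m; lia.
  - by apply: qpochp_widen; rewrite /m; lia.
  - by apply: qpochp_widen; rewrite /m; lia.
have E2 : eq_upto N (\sum_(k < L.+1) q ^+ tri_offset m k) (gauss_psi N *+ 2).
  rewrite (sum_tri_offset (fun e => q ^+ e)) mulr2n.
  by apply: eq_uptoD; apply: gauss_psi_widen; rewrite /m; lia.
have /eq_uptoP E := eq_upto_trans _ (esym E1)
  (eq_upto_trans _ (qpochm_qbinomial_tri (leqnn m)) E2).
by apply/eq_uptoP => i Hi; have := E i Hi; rewrite !coefMn !mulr2n; lia.
Qed.

Definition qpoch_odd M := \prod_(i < M | odd i.+1) (1 - q ^+ i.+1).
Definition qpoch_even M := \prod_(i < M | ~~ odd i.+1) (1 - q ^+ i.+1).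

Lemma qpochm_odd_even M : qpochm q M = qpoch_odd M * qpoch_even M.
Proof. exact: (bigID (fun i : 'I_M => odd i.+1)). Qed.

Lemma qpoch_even_double M : qpoch_even M.*2 = qpochm q M * qpochp q M.
Proof.
elim: M => [|M IH]; first by rewrite /qpoch_even /qpochm /qpochp !big_ord0 mulr1.
rewrite doubleS /qpoch_even !big_mkcond !big_ord_recr /= -!big_mkcond -/(qpoch_even _).
rewrite IH odd_double /= mulr1 qpochmS /qpochp big_ord_recr /= -/(qpochp q M).
have -> : q ^+ (M.*2).+2 = q ^+ M.+1 * q ^+ M.+1 by rewrite -exprD addnn doubleS.
ring.
Qed.

Lemma qpochp_qpoch_odd N : eq_upto N (qpochp q N * qpoch_odd N) 1.
Proof.
apply: (@eq_upto_mulIr _ _ _ _ (qpochm q N)); first exact: (coef0_1Bexp xpredT).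
have -> : qpochp q N * qpoch_odd N * qpochm q N = qpoch_odd N * qpoch_even N.*2.
  by rewrite qpoch_even_double; ring.
have NN : (N <= N.*2)%N by rewrite -addnn leq_addr.
apply: (eq_upto_trans (qpoch_odd N.*2 * qpoch_even N.*2)).
  exact: eq_uptoM (esym (prod_1Bexp_widen (fun i => odd i.+1) NN)) (erefl _).
by rewrite mul1r -qpochm_odd_even; apply: qpochm_widen.
Qed.

Lemma gauss_psi_qpoch_odd N : eq_upto N (gauss_psi N * qpoch_odd N) (qpoch_even N).
Proof.
apply: (eq_upto_trans (qpochm q N * qpochp q N * (qpochp q N * qpoch_odd N))).
  rewrite mulrA; apply: eq_uptoM (esym (gauss_psiE N)) (erefl _).
apply: (eq_upto_trans (qpochm q N * qpochp q N * 1)).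
  exact: eq_uptoM (erefl _) (qpochp_qpoch_odd N).
rewrite mulr1 -qpoch_even_double; apply: (prod_1Bexp_widen (fun i => ~~ odd i.+1)).
by rewrite -addnn leq_addr.
Qed.

End Gauss.

Lemma coef_NXn (R : nzRingType) e i :
  ((- 'X : {poly R}) ^+ e)`_i = if e == i then (-1) ^+ i else 0.
Proof.
rewrite [_ ^+ e]exprNn.
have -> : (-1 : {poly R}) ^+ e = ((-1) ^+ e)%:P by rewrite polyC_exp polyCN polyC1.
rewrite coefCM coefXn eq_sym.
by case: eqP => [->|_]; rewrite ?mulr1 ?mulr0.
Qed.

Lemma exprn_sum_tuple (R : comNzRingType) (I : finType) (F : I -> R) k :
  (\sum_i F i) ^+ k = \sum_(t : k.-tuple I) \prod_(x <- t) F x.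
Proof.
rewrite -[k in LHS]card_ord -prodr_const bigA_distr_bigA /=.
rewrite (reindex (fun t : k.-tuple I => [ffun i => tnth t i])) /=; last first.
  apply: onW_bij; exists (fun f : {ffun 'I_k -> I} => [tuple f i | i < k]).
    by move=> t; apply: eq_from_tnth => i; rewrite tnth_mktuple ffunE.
  by move=> f; apply/ffunP => i; rewrite ffunE tnth_mktuple.
by apply: eq_bigr => t _; rewrite big_tuple; apply: eq_bigr => i _; rewrite ffunE.
Qed.

Section PodGeneratingFunction.
Local Notation q := (- 'X : {poly int}).

Lemma coef0_NX : q`_0 = 0. Proof. by rewrite coefN coefX oppr0. Qed.

Lemma NX_neq0 : q != 0. Proof. by rewrite oppr_eq0 polyX_eq0. Qed.

Definition pod_gf n : {poly int} :=
  \prod_(i < n) \sum_(j < n.+1) (if odd i.+1 ==> (j <= 1)%N then 'X^(i.+1 * j) else 0).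

Lemma coef_pod_gf n : (pod_gf n)`_n = (pod n)%:Z.
Proof.
rewrite /pod_gf bigA_distr_bigA /= coef_sum.
rewrite /pod -natz -sumr_const [RHS]big_mkcond /=.
apply: eq_bigr => f _; rewrite inE /is_pod_partition.
case: (boolP [forall i : 'I_n, odd i.+1 ==> (f i <= 1)%N]) => [allowed|].
  rewrite (eq_bigr (fun i : 'I_n => 'X^(i.+1 * f i))) => [|i _]; last first.
    by rewrite (forallP allowed).
  by rewrite prodrXr coefXn andbT eq_sym; case: (_ == n).
case/forallPn => i /negbTE forbidden; rewrite andbF.
by rewrite (bigD1 i) //= forbidden mul0r coef0.
Qed.

Lemma pod_gf_factor n (i : 'I_n) :
  eq_upto n ((if ~~ odd i.+1 then 1 - q ^+ i.+1 else 1) *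
    \sum_(j < n.+1) (if odd i.+1 ==> (j <= 1)%N then 'X^(i.+1 * j) else 0))
    (if odd i.+1 then 1 - q ^+ i.+1 else 1).
Proof.
rewrite exprNn -signr_odd; case: (boolP (odd i.+1)) => odd_i /=; rewrite mul1r.
  case: n i odd_i => [[]//|n] i odd_i.
  rewrite !big_ord_recl big1 => [|j _]; last by [].
  by rewrite /= muln0 muln1 addr0 expr1 mulN1r opprK.
rewrite (eq_bigr (fun j : 'I_n.+1 => ('X^(i.+1) : {poly int}) ^+ j)) => [|j _].
  by apply: eq_upto_geometric; rewrite coefXn.
by rewrite exprM.
Qed.

Lemma pod_gf_qpoch n : eq_upto n (qpoch_even q n * pod_gf n) (qpoch_odd q n).
Proof.
have mkcond (P : pred nat) : \prod_(i < n | P i) (1 - q ^+ i.+1) =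
    \prod_(i < n) (if P i then 1 - q ^+ i.+1 else 1) by rewrite big_mkcond.
rewrite /qpoch_even /qpoch_odd /pod_gf.
rewrite (mkcond (fun k => ~~ odd k.+1)) (mkcond (fun k => odd k.+1)).
by rewrite -big_split; apply: eq_upto_prod => i _; apply: pod_gf_factor.
Qed.

Lemma pod_gf_psi n : eq_upto n (pod_gf n * gauss_psi q n) 1.
Proof.
apply: (@eq_upto_mulIr _ _ _ _ (qpoch_odd q n)).
  exact: (coef0_1Bexp coef0_NX (fun k => odd k.+1)).
rewrite mul1r -mulrA; apply: (eq_upto_trans (pod_gf n * qpoch_even q n)).
  exact: eq_uptoM (erefl _) (gauss_psi_qpoch_odd coef0_NX NX_neq0 n).
by rewrite mulrC; apply: pod_gf_qpoch.
Qed.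

Definition tri_gf n : {poly int} := \sum_(x < n) (if triangular x.+1 then q ^+ x.+1 else 0).

Definition comp_gf n := \sum_(k < n.+1) (- tri_gf n) ^+ k.

Lemma prod_tri_gf_terms n (s : seq 'I_n) :
  \prod_(x <- s) (if triangular x.+1 then q ^+ x.+1 else 0) =
  if all (fun x : 'I_n => triangular x.+1) s then q ^+ (\sum_(x <- s) x.+1) else 0.
Proof.
elim: s => [|x s IH]; first by rewrite !big_nil.
rewrite !big_cons IH /=; case: (triangular x.+1); last by rewrite mul0r.
by case: (all _ s); rewrite ?mulr0 // -exprD.
Qed.

Lemma coef_tri_gf_exprn n k : (tri_gf n ^+ k)`_n = (-1) ^+ n *
  #|[pred t : k.-tuple 'I_n | comp_in_T triangular t && (comp_sum t == n)]|%:R.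
Proof.
rewrite exprn_sum_tuple coef_sum -sumr_const mulr_sumr [RHS]big_mkcond /=.
apply: eq_bigr => t _; rewrite prod_tri_gf_terms inE /comp_in_T /comp_sum.
by case: (all _ t); rewrite ?coef0 // coef_NXn mulr1.
Qed.

Lemma coef_comp_gf n : (comp_gf n)`_n = (-1) ^+ n * signed_comp_sum triangular n.
Proof.
rewrite coef_sum mulr_sumr; apply: eq_bigr => k _.
have -> : (- tri_gf n) ^+ k = ((-1) ^+ k)%:P * tri_gf n ^+ k.
  by rewrite [LHS]exprNn polyC_exp polyCN polyC1.
rewrite coefCM coef_tri_gf_exprn sumr_const mulrCA mulr_natr.
by congr (_ * (_ *+ _)); apply: eq_card => t; rewrite inE.
Qed.

Lemma coef_gauss_psi n i :
  (gauss_psi q n)`_i = if [exists j : 'I_n.+1, 'C(j.+1, 2) == i] then (-1) ^+ i else 0.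
Proof.
rewrite coef_sum; under eq_bigr => j _ do rewrite coef_NXn.
case: ifP => [/existsP [j0 /eqP j0i]|/negbT/existsPn none].
  rewrite (bigD1 j0) //= j0i eqxx big1 ?addr0 // => j j_neq_j0.
  by rewrite -j0i ifN //; apply: contra j_neq_j0 => /eqP/bin2S_inj/val_inj ->.
by rewrite big1 // => j _; rewrite ifN.
Qed.

Lemma tri_gf_psi n : eq_upto n (1 + tri_gf n) (gauss_psi q n).
Proof.
apply/eq_uptoP => -[_ | i lt_in]; rewrite coef_gauss_psi coefD coef1 coef_sum.
  rewrite big1 => [|x _]; last by case: ifP; rewrite ?coef0 // coef_NXn.
  by rewrite ifT //; apply/existsP; exists ord0.
rewrite add0r (bigD1 (Ordinal lt_in)) //= big1 => [|x x_neq_i]; last first.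
  case: ifP => _; rewrite ?coef0 // coef_NXn ifN //.
by rewrite -(@triangularE n i.+1 lt_in) addr0; case: ifP; rewrite ?coef0 // coef_NXn eqxx.
Qed.

Lemma comp_gf_psi n : eq_upto n (comp_gf n * gauss_psi q n) 1.
Proof.
rewrite mulrC; apply: (eq_upto_trans ((1 - - tri_gf n) * comp_gf n)).
  by apply: eq_uptoM (erefl _); rewrite opprK; apply: esym (tri_gf_psi n).
apply: eq_upto_geometric; rewrite coefN coef_sum big1 ?oppr0 // => x _.
by case: ifP; rewrite ?coef0 // coef_NXn.
Qed.

End PodGeneratingFunction.

Unset Implicit Arguments.

Theorem corollary1 (n : nat) :
  (pod n)%:Z = (-1) ^+ n * signed_comp_sum triangular n.
Proof.
have psi0 : (gauss_psi (- 'X) n)`_0 = 1.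
  by rewrite coef_gauss_psi ifT //; apply/existsP; exists ord0.
have /eq_uptoP pod_comp : eq_upto n (pod_gf n) (comp_gf n).
  apply: (eq_upto_mulIr psi0).
  apply: (eq_upto_trans 1); [exact: pod_gf_psi | exact: esym (comp_gf_psi n)].
by rewrite -coef_pod_gf pod_comp // coef_comp_gf.
Qed.
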